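(* Let $(X,\rho,\mu)$ be a $K$-doubling metric measure space. There exists $\delta=\delta(K)>0$ such that: (1) if $x,y\in X$, $\eta>0$, $B_x$ is $(\delta,\eta)$-full at $x$, $B_y$ is $(\delta,\eta)$-full at $y$, and $0<t=\rho(x,y)<\eta/3$, then $\mu\big(B_{3t}(x)\cap B_x\cap B_{3t}(y)\cap B_y\big)>0$; (2) let $E\subseteq X$ be nonempty and $x$ a $\mu$-interior point of the closure $\overline E$; for every $y\in E$ let $B_y$ be a $\mu$-measurable set, and assume there is $\xi>0$ such that for every $z\in\overline E\setminus\{x\}$ with $\rho(z,x)<\xi$ there exist $l,\eta>0$ such that $B_y$ is $(\delta,\eta)$-full at $y$ for every $y\in E\cap B_l(z)$. Then there exist a $\mu$-neighborhood $U$ of $x$ and a map $r_x\colon U\to E$ such that $y\in B_{r_x(y)}$ for every $y\in U\setminus\{x\}$.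
   Context: A $K$-doubling metric measure space ($K>0$) is a triple $(X,\rho,\mu)$ where $(X,\rho)$ is a complete separable metric space and $\mu$ is a Borel-regular outer measure on $X$ with $0<\mu(B_{2r}(x))\le K\mu(B_r(x))<+\infty$ for all $x\in X$, $r>0$. A point $x\in E$ is a $\mu$-interior point of $E$ if there is a Borel set $B\subseteq E$ with $\lim_{r\to0^+}\mu(B_r(x)\setminus B)/\mu(B_r(x))=0$, and then $E$ is a $\mu$-neighborhood of $x$. For $\delta,\eta>0$, a $\mu$-measurable set $B$ containing $y$ is $(\delta,\eta)$-full at $y$ if $\sup_{0<r<\eta}\mu(B_r(y)\setminus B)/\mu(B_r(y))\le\delta$. *)

From HB Require Import structures.
From mathcomp Require Import all_boot all_order all_algebra.
From mathcomp Require Import all_classical all_reals all_analysis.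

Set Implicit Arguments.
Unset Strict Implicit.
Unset Printing Implicit Defensive.
Import Order.TTheory GRing.Theory Num.Theory numFieldNormedType.Exports.
Local Open Scope classical_set_scope.
Local Open Scope ring_scope.

Section MetricMeasure.
Variables (R : realType) (X : Type) (rho : X -> X -> R).

Definition is_metric : Prop :=
  [/\ (forall x y, 0 <= rho x y),
      (forall x y, rho x y = 0 <-> x = y),
      (forall x y, rho x y = rho y x) &
      (forall x y z, rho x z <= rho x y + rho y z)].

Definition mball (x : X) (r : R) : set X := [set y | rho x y < r].

Definition cauchy_seq (u : nat -> X) : Prop :=
  forall e : R, 0 < e -> exists N : nat, forall m n : nat,
    (N <= m)%N -> (N <= n)%N -> rho (u m) (u n) < e.

Definition converges_to (u : nat -> X) (l : X) : Prop :=
  forall e : R, 0 < e -> exists N : nat, forall n : nat, (N <= n)%N -> rho (u n) l < e.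

Definition metric_complete : Prop :=
  forall u : nat -> X, cauchy_seq u -> exists l, converges_to u l.

Definition metric_separable : Prop :=
  exists D : set X, countable D /\
    forall x (r : R), 0 < r -> exists2 d, D d & rho x d < r.

Definition metric_open (A : set X) : Prop :=
  forall x, A x -> exists2 r : R, 0 < r & mball x r `<=` A.

Definition borel_set (A : set X) : Prop := <<s metric_open >> A.

Definition metric_closure (E : set X) : set X :=
  [set z | forall r : R, 0 < r -> exists2 e, E e & rho z e < r].

Variable mu : {outer_measure set X -> \bar R}.

Definition mu_measurable (A : set X) : Prop := mu.-caratheodory A.

Definition borel_regular : Prop :=
  (forall A, borel_set A -> mu_measurable A) /\
  (forall A, exists B, [/\ borel_set B, A `<=` B & mu B = mu A]).

Definition doubling_mms (K : R) : Prop :=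
  [/\ 0 < K, is_metric, metric_complete /\ metric_separable, borel_regular &
      forall x (r : R), 0 < r ->
        [/\ (0 < mu (mball x r))%E,
            (mu (mball x (2 * r)) <= K%:E * mu (mball x r))%E &
            (mu (mball x r) < +oo)%E] ].

(** the ratio mu(B_r(x) \ B) / mu(B_r(x)) (both finite in a doubling space) *)
Definition density_ratio (B : set X) (x : X) (r : R) : R :=
  fine (mu (mball x r `\` B)) / fine (mu (mball x r)).

Definition mu_interior_point (E : set X) (x : X) : Prop :=
  E x /\ exists B : set X, [/\ borel_set B, B `<=` E &
    density_ratio B x r @[r --> (0:R)^'+] --> (0:R)].

Definition mu_neighborhood (U : set X) (x : X) : Prop := mu_interior_point U x.

Definition full_at (delta eta : R) (B : set X) (y : X) : Prop :=
  [/\ mu_measurable B, B y &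
      forall r : R, 0 < r < eta -> density_ratio B y r <= delta].

End MetricMeasure.

From HB Require Import structures.
From mathcomp Require Import all_boot all_order all_algebra.
From mathcomp Require Import all_classical all_reals all_analysis.
From mathcomp Require Import lra.

Set Implicit Arguments.
Unset Strict Implicit.
Unset Printing Implicit Defensive.
Import Order.TTheory GRing.Theory Num.Theory.
Local Open Scope classical_set_scope.
Local Open Scope ring_scope.

(* (1) With t = rho x y, the ball of radius 2t about x lies in both balls of
   radius 3t. Fullness of Bx at x, and fullness of By at y followed by one
   doubling step, show that at most delta (1 + K) of its measure lies outside
   Bx ∩ By. For delta = (1 + K)^-3 this fraction is < 1.
   (2) Let A be the set of points z ≠ x of the closure of E, close to x, that lie
   in no B_y. Such a z is arbitrarily close to points y of E at which B_y is
   full. So A has density at most delta K^2 in all small balls centred on A.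
   Sets with density below 1/K at all their points are null. To see this,
   approximate A from inside by a closed set F (Borel regularity, and inner
   regularity of Borel sets by closed sets), and F from outside by a thin
   thickening. Then cover A ∩ F with the balls of a maximal s-separated net;
   the disjoint half-size balls and doubling give
   mu (A ∩ F) <= delta K^3 mu (thickening F) ≈ delta K^3 mu A.
   Removing the null set A keeps x a mu-interior point, and every other point of
   the remaining set lies in some B_y, which defines r_x. *)

(* Caratheodory sets carry a measure only on a pointed type, hence [pointed_at]. *)
Definition pointed_at (T : Type) (t : T) : Type := T.

Section pointed_at_instances.
Variables (T : Type) (t : T).
HB.instance Definition _ := gen_eqMixin (pointed_at t).
HB.instance Definition _ := gen_choiceMixin (pointed_at t).
HB.instance Definition _ := isPointed.Build (pointed_at t) t.
End pointed_at_instances.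

Lemma caratheodory_bigcap_approx (R : realType) (T : Type)
    (mu : {outer_measure set T -> \bar R}) (F : (set T)^nat) (e : R) : 0 < e ->
  (forall n, mu.-caratheodory (F n)) -> (forall n, F n.+1 `<=` F n) ->
  (mu (F 0%N) < +oo)%E -> exists N, (mu (F N) < mu (\bigcap_n F n) + e%:E)%E.
Proof.
move=> e0 mF decF F0fin.
have [F0|/eqP/set0P[t _]] := pselect (F 0%N = set0).
  exists 0%N; have -> : \bigcap_n F n = set0.
    by rewrite -subset0 -F0; exact: bigcap_inf.
  by rewrite F0 outer_measure0 add0e lte_fin.
pose nu : {measure set (caratheodory_type (mu : set (pointed_at t) -> _)) -> \bar R}
  := mu.
have cvgF : (fun n => mu (F n)) @ \oo --> mu (\bigcap_n F n).
  apply: (@nonincreasing_cvg_mu _ _ R nu F F0fin mF).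
    by apply: bigcap_measurableType => k _; exact: mF.
  by apply/nonincreasing_seqP => n; apply/subsetPset; exact: decF.
have capfin : mu (\bigcap_n F n) \is a fin_num.
  rewrite ge0_fin_numE ?outer_measure_ge0 //; apply: le_lt_trans F0fin.
  by apply: le_outer_measure; exact: bigcap_inf.
have lt_cap : (mu (\bigcap_n F n) < mu (\bigcap_n F n) + e%:E)%E.
  by rewrite -(fineK capfin) -EFinD lte_fin ltrDl.
by have [N _ /(_ N (leqnn N))] := cvgF _ (open_ereal_lt' lt_cap); exists N.
Qed.

Lemma setD_bigcup_sub (T : Type) (A F G : (set T)^nat) N :
  (forall i, F i `<=` A i) -> (forall i, A i `<=` G i) ->
  \bigcup_i G i `\` \big[setU/set0]_(i < N) F i `<=`
  \bigcup_i (G i `\` F i) `|` (\bigcup_i A i `\` \big[setU/set0]_(i < N) A i).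
Proof.
move=> FA AG z [[i _ Gz] nFz].
have [[j _ Ajz]|nAz] := pselect ((\bigcup_i A i) z); last first.
  by left; exists i => //; split=> // /FA Aiz; apply: nAz; exists i.
have [[k kN Akz]|nk] := pselect (exists2 k, (k < N)%N & A k z).
  left; exists k => //; split; first exact: AG.
  by move=> Fkz; apply: nFz; rewrite -bigcup_mkord; exists k.
right; split; first by exists j.
by rewrite -bigcup_mkord => -[k kN Akz]; apply: nk; exists k.
Qed.

Section metric_space.
Variables (R : realType) (X : Type) (rho : X -> X -> R).
Hypothesis rho_metric : is_metric rho.
Local Notation ball := (mball rho).

Lemma metric_ge0 x y : 0 <= rho x y.
Proof. by case: rho_metric. Qed.

Lemma metric_sym x y : rho x y = rho y x.
Proof. by case: rho_metric. Qed.

Lemma metric_triangle x y z : rho x z <= rho x y + rho y z.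
Proof. by case: rho_metric. Qed.

Lemma metric_xx x : rho x x = 0.
Proof. by case: rho_metric => _ /(_ x x) [_ ->]. Qed.

Lemma mball_sub x y r r' : rho x y + r <= r' -> ball y r `<=` ball x r'.
Proof.
move=> le_r z /= yz; apply: le_lt_trans (metric_triangle x y z) _.
by apply: lt_le_trans le_r; rewrite ltrD2l.
Qed.

Lemma mball_le x r r' : r <= r' -> ball x r `<=` ball x r'.
Proof. by move=> le_r; apply: mball_sub; rewrite metric_xx add0r. Qed.

Lemma metric_open_mball x r : metric_open rho (ball x r).
Proof.
move=> y /= xy; exists (r - rho x y); first by rewrite subr_gt0.
by apply: mball_sub; rewrite addrC subrK.
Qed.

Lemma metric_open_setI A B :
  metric_open rho A -> metric_open rho B -> metric_open rho (A `&` B).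
Proof.
move=> oA oB z [Az Bz]; have [r1 r10 r1A] := oA z Az; have [r2 r20 r2B] := oB z Bz.
exists (Num.min r1 r2); first by rewrite lt_min r10 r20.
by move=> w zw; split; [apply: r1A | apply: r2B];
  apply: mball_le zw; rewrite ge_min lexx ?orbT.
Qed.

Lemma metric_open_bigcup (A : (set X)^nat) :
  (forall n, metric_open rho (A n)) -> metric_open rho (\bigcup_n A n).
Proof.
move=> oA z [n _ Az]; have [r r0 rA] := oA n z Az.
by exists r => // w /rA; exists n.
Qed.

Definition metric_closed (F : set X) := metric_open rho (~` F).

Lemma metric_closed_bigsetU (F : (set X)^nat) n :
  (forall i, metric_closed (F i)) -> metric_closed (\big[setU/set0]_(i < n) F i).
Proof.
move=> cF; elim: n => [|n IHn].
  by rewrite big_ord0 /metric_closed setC0 => z _; exists 1 => //; exact: ltr01.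
rewrite big_ord_recr /metric_closed setCU.
by apply: metric_open_setI; [exact: IHn | exact: cF].
Qed.

Definition thickening (F : set X) (r : R) : set X :=
  [set y | exists2 w, F w & rho w y < r].

Lemma metric_open_thickening F r : metric_open rho (thickening F r).
Proof.
move=> y [w Fw wy]; exists (r - rho w y); first by rewrite subr_gt0.
move=> z yz; exists w => //; apply: le_lt_trans (metric_triangle w y z) _.
by rewrite -ltrBrDl.
Qed.

Lemma le_thickening F r r' : r <= r' -> thickening F r `<=` thickening F r'.
Proof. by move=> le_r y [w Fw wy]; exists w => //; exact: lt_le_trans le_r. Qed.

Lemma thickening_sub_mball F x R1 r :
  F `<=` ball x R1 -> thickening F r `<=` ball x (R1 + r).
Proof.
move=> FB y [w /FB /= xw wy]; apply: le_lt_trans (metric_triangle x w y) _.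
exact: ltrD.
Qed.

Lemma bigcap_thickening_sub F :
  metric_closed F -> \bigcap_k thickening F k.+1%:R^-1 `<=` F.
Proof.
move=> Fclosed y Fy; apply: contrapT => nFy.
have [r r0 rF] := Fclosed y nFy.
have [k] := ltr_add_invr r0; rewrite add0r => kr.
have [w Fw wy] := Fy k I.
by apply: (rF w) Fw; rewrite /mball /= metric_sym (lt_trans wy).
Qed.

Lemma borel_setC A : borel_set rho A -> borel_set rho (~` A).
Proof. by rewrite -setTD; exact: sigma_algebraCD. Qed.

Lemma borel_setU A B : borel_set rho A -> borel_set rho B -> borel_set rho (A `|` B).
Proof.
by move=> bA bB; rewrite -bigcup2E; apply: sigma_algebra_bigcup => -[|[|n]] //=;
  exact: sigma_algebra0.
Qed.

Lemma borel_setI A B : borel_set rho A -> borel_set rho B -> borel_set rho (A `&` B).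
Proof.
move=> bA bB; rewrite -(setCK (A `&` B)) setCI.
by apply: borel_setC; apply: borel_setU; exact: borel_setC.
Qed.

Lemma borel_setD A B : borel_set rho A -> borel_set rho B -> borel_set rho (A `\` B).
Proof. by move=> bA bB; rewrite setDE; apply: borel_setI => //; exact: borel_setC. Qed.

Lemma borel_mball x r : borel_set rho (ball x r).
Proof. by apply: sub_sigma_algebra; exact: metric_open_mball. Qed.

Definition separated (s : R) n (z : nat -> X) :=
  forall i j, (i < n)%N -> (j < n)%N -> i != j -> s <= rho (z i) (z j).

Section doubling_measure.
Variables (mu : {outer_measure set X -> \bar R}) (K : R).
Hypotheses (K_gt0 : 0 < K) (mu_regular : borel_regular rho mu)
  (mu_doubling : forall x (r : R), 0 < r ->
     [/\ (0 < mu (ball x r))%E, (mu (ball x (2 * r)) <= K%:E * mu (ball x r))%E &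
         (mu (ball x r) < +oo)%E]).

Lemma mu_mball_gt0 x r : 0 < r -> (0 < mu (ball x r))%E.
Proof. by move=> r0; case: (mu_doubling x r0). Qed.

Lemma mu_mball_lty x r : (mu (ball x r) < +oo)%E.
Proof.
have [r0|] := ltP 0 r; first by case: (mu_doubling x r0).
move=> r_le0; have -> : ball x r = set0.
  apply/seteqP; split=> // y /= xy.
  by have := lt_le_trans (le_lt_trans (metric_ge0 x y) xy) r_le0; rewrite ltxx.
by rewrite outer_measure0.
Qed.

Lemma mu_sub_mball_lty A x r : A `<=` ball x r -> (mu A < +oo)%E.
Proof. by move=> AB; apply: le_lt_trans (mu_mball_lty x r); exact: le_outer_measure. Qed.

Lemma mu_sub_mball_fineK A x r : A `<=` ball x r -> mu A = (fine (mu A))%:E.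
Proof.
by move=> AB; rewrite fineK // ge0_fin_numE ?outer_measure_ge0 // (mu_sub_mball_lty AB).
Qed.

Lemma mu_mball_fineK x r : mu (ball x r) = (fine (mu (ball x r)))%:E.
Proof. exact: mu_sub_mball_fineK (@subset_refl _ (ball x r)). Qed.

Lemma mu_mball_doubling x r p : 0 < r ->
  (mu (ball x (2 ^+ p * r)) <= (K ^+ p)%:E * mu (ball x r))%E.
Proof.
move=> r0; elim: p => [|p IHp]; first by rewrite !expr0 mul1r mul1e.
have r0' : 0 < 2 ^+ p * r by rewrite mulr_gt0 // exprn_gt0.
rewrite exprS -mulrA; have [_ dbl _] := mu_doubling x r0'.
apply: le_trans dbl _; rewrite exprS EFinM -muleA.
by apply: lee_wpmul2l; rewrite // lee_fin ltW.
Qed.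

Lemma mu_mball_le_doubling x y r r' p : 0 < r -> rho x y + r' <= 2 ^+ p * r ->
  (mu (ball y r') <= (K ^+ p)%:E * mu (ball x r))%E.
Proof.
move=> r0 le_r; apply: le_trans (mu_mball_doubling x p r0).
exact/le_outer_measure/mball_sub.
Qed.

Lemma full_at_mu_le d eta B e z r r' : full_at rho mu d eta B e ->
  0 < r' < eta -> rho e z + r <= r' ->
  (mu (ball z r `\` B) <= d%:E * mu (ball e r'))%E.
Proof.
move=> [_ _ ratio_le] r'_bnd le_r; have /andP[r'0 _] := r'_bnd.
have sub : ball z r `\` B `<=` ball e r' `\` B.
  by move=> y [zy nBy]; split=> //; exact: mball_sub zy.
apply: le_trans (le_outer_measure mu _ _ sub) _.
have := ratio_le r' r'_bnd; rewrite /density_ratio.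
have muB : (0 < fine (mu (ball e r')))%R.
  by rewrite -lte_fin -mu_mball_fineK mu_mball_gt0.
have subD : ball e r' `\` B `<=` ball e r' by move=> y [].
rewrite ler_pdivrMr // -lee_fin EFinM -(mu_sub_mball_fineK subD).
by rewrite -mu_mball_fineK.
Qed.

Lemma full_at_overlap d x y eta Bx By : 0 <= d -> d * (1 + K) < 1 ->
  full_at rho mu d eta Bx x -> full_at rho mu d eta By y ->
  0 < rho x y -> rho x y < eta / 3 ->
  (0 < mu (ball x (3 * rho x y) `&` Bx `&` ball y (3 * rho x y) `&` By))%E.
Proof.
move=> d0 dK fx fy t0; set t := rho x y => t_lt.
have t3_lt : 3 * t < eta by rewrite -ltr_pdivlMl // mulrC.
have t20 : 0 < 2 * t by rewrite mulr_gt0.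
pose S := ball x (2 * t).
have SBy : S `<=` ball y (3 * t) by apply: mball_sub; rewrite metric_sym -/t; lra.
have core_sub : S `&` Bx `&` By `<=` ball x (3 * t) `&` Bx `&` ball y (3 * t) `&` By.
  move=> z [[Sz Bxz] Byz]; split=> //; split=> //; last exact: SBy.
  by split=> //; apply: mball_le Sz; lra.
apply: lt_le_trans (le_outer_measure mu _ _ core_sub).
have muSBx : (mu (S `\` Bx) <= d%:E * mu S)%E.
  by apply: full_at_mu_le fx _ _; rewrite ?metric_xx ?add0r // t20 /=; lra.
have muSBy : (mu (S `\` By) <= d%:E * (K%:E * mu S))%E.
  apply: le_trans (full_at_mu_le (r' := 3 * t) fy _ _) _.
  - by rewrite mulr_gt0 //=.
  - by rewrite metric_sym -/t; lra.
  apply: lee_wpmul2l; first by rewrite lee_fin.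
  apply: (@mu_mball_le_doubling _ _ _ _ 1) => //.
  by rewrite expr1 -/t; lra.
have muS_le : (mu S <= mu (S `&` Bx `&` By) + mu (S `\` Bx) + mu (S `\` By))%E.
  have cover : S `<=` (S `&` Bx `&` By) `|` (S `\` Bx) `|` (S `\` By).
    move=> z Sz; have [Bxz|] := pselect (Bx z); last by left; right.
    by have [Byz|] := pselect (By z); [left; left | right].
  apply: le_trans (le_outer_measure mu _ _ cover) _.
  by apply: le_trans (outer_measureU2 _ _ _) _; rewrite leeD2r // outer_measureU2.
have muS_gt0 := mu_mball_gt0 x t20.
have [sub1 sub2 sub3] : [/\ S `&` Bx `&` By `<=` S, S `\` Bx `<=` S & S `\` By `<=` S].
  by split=> z; case=> // -[].
move: muSBx muSBy muS_le muS_gt0.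
rewrite (mu_sub_mball_fineK sub1) (mu_sub_mball_fineK sub2) (mu_sub_mball_fineK sub3).
rewrite (mu_mball_fineK x) -!EFinM -!EFinD !lee_fin !lte_fin.
have : 0 <= fine (mu (S `&` Bx `&` By)) by apply/fine_ge0/outer_measure_ge0.
by move: (fine _) (fine _) (fine _) (fine _) => a b c m; nra.
Qed.

Lemma caratheodory_metric_open A : metric_open rho A -> mu.-caratheodory A.
Proof. by move=> oA; apply: mu_regular.1; exact: sub_sigma_algebra. Qed.

Lemma bigcup_tail_approx (A : (set X)^nat) x0 R0 e :
  (forall i, mu.-caratheodory (A i)) -> 0 < e -> exists N,
    (mu ((\bigcup_i A i `\` \big[setU/set0]_(i < N) A i) `&` ball x0 R0) < e%:E)%E.
Proof.
move=> mA e0.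
pose C N := (\bigcup_i A i `\` \big[setU/set0]_(i < N) A i) `&` ball x0 R0.
have mC N : mu.-caratheodory (C N).
  apply: caratheodory_measurable_setI.
    apply: caratheodory_measurable_setD; first exact: caratheodory_measurable_bigcup.
    exact: caratheodory_measurable_bigsetU.
  exact/caratheodory_metric_open/metric_open_mball.
have decC N : C N.+1 `<=` C N.
  move=> z [[Az nAz] Bz]; split=> //; split=> // Az'; apply: nAz.
  by rewrite big_ord_recr /=; left.
have C0fin : (mu (C 0%N) < +oo)%E.
  by apply: (mu_sub_mball_lty (x := x0) (r := R0)) => z [].
have capC : \bigcap_N C N = set0.
  apply/seteqP; split=> // z Cz; have [[[i _ Aiz] _] _] := Cz 0%N I.
  by have [[_ []]] := Cz i.+1 I; rewrite big_ord_recr /=; right.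
have [N] := caratheodory_bigcap_approx e0 mC decC C0fin.
by rewrite capC outer_measure0 add0e; exists N.
Qed.

Section inner_regularity.
Variables (x0 : X) (R0 : R).

Definition closed_open_regular (S : set X) := mu.-caratheodory S /\
  forall e, 0 < e -> exists F G, [/\ metric_closed F, metric_open rho G,
    F `<=` S, S `<=` G & (mu ((G `\` F) `&` ball x0 R0) < e%:E)%E].

Lemma closed_open_regular_open S : metric_open rho S -> closed_open_regular S.
Proof.
move=> oS; split=> [|e e0]; first exact: caratheodory_metric_open.
pose T k := thickening (~` S) k.+1%:R^-1.
pose C k := S `&` T k `&` ball x0 R0.
have mC k : mu.-caratheodory (C k).
  by do 2?apply: caratheodory_measurable_setI; apply: caratheodory_metric_open;
    [exact: oS | exact: metric_open_thickening | exact: metric_open_mball].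
have decC k : C k.+1 `<=` C k.
  move=> z [[Sz Tz] Bz]; split=> //; split=> //; apply: le_thickening Tz.
  by rewrite lef_pV2 ?posrE ?ltr0Sn // ler_nat.
have C0fin : (mu (C 0%N) < +oo)%E.
  by apply: (mu_sub_mball_lty (x := x0) (r := R0)) => z [].
have capC : \bigcap_k C k = set0.
  apply/seteqP; split=> // z Cz; have [[Sz _] _] := Cz 0%N I.
  have cS : metric_closed (~` S) by rewrite /metric_closed setCK.
  have Tz : (\bigcap_k T k) z by move=> k _; case: (Cz k I) => -[].
  exact: bigcap_thickening_sub cS z Tz Sz.
have [N] := caratheodory_bigcap_approx e0 mC decC C0fin.
rewrite capC outer_measure0 add0e => muCN.
exists (~` T N), S; split=> //.
- by rewrite /metric_closed setCK; exact: metric_open_thickening.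
- move=> z nTz; apply: contrapT => nSz; apply: nTz; exists z => //.
  by rewrite metric_xx invr_gt0 ltr0Sn.
- by rewrite setDE setCK.
Qed.

Lemma closed_open_regular_setC S :
  closed_open_regular S -> closed_open_regular (~` S).
Proof.
move=> [mS regS]; split=> [|e /regS[F [G [cF oG FS SG muGF]]]].
  exact: caratheodory_measurable_setC.
exists (~` G), (~` F); split=> //; try exact: subsetC.
  by rewrite /metric_closed setCK.
by rewrite [~` F `\` _]setDE setCK [~` F `&` _]setIC -setDE.
Qed.

Lemma closed_open_regular_bigcup (A : (set X)^nat) :
  (forall i, closed_open_regular (A i)) -> closed_open_regular (\bigcup_i A i).
Proof.
move=> regA; have mA i := (regA i).1.
split=> [|e e0]; first exact: caratheodory_measurable_bigcup.
have e20 : 0 < e / 2 by rewrite divr_gt0.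
have /choice[FG FGi] : forall i, exists FG : set X * set X,
    [/\ metric_closed FG.1, metric_open rho FG.2, FG.1 `<=` A i, A i `<=` FG.2 &
      (mu ((FG.2 `\` FG.1) `&` ball x0 R0) < (e / 2 / (2 ^ i.+1)%:R)%:E)%E].
  move=> i; have [_ /(_ (e / 2 / (2 ^ i.+1)%:R))] := regA i.
  case=> [|F [G FG]]; last by exists (F, G).
  by rewrite divr_gt0 // ltr0n expn_gt0.
have FA i : (FG i).1 `<=` A i by case: (FGi i).
have AG i : A i `<=` (FG i).2 by case: (FGi i).
have [N muCN] := bigcup_tail_approx x0 R0 mA e20.
exists (\big[setU/set0]_(i < N) (FG i).1), (\bigcup_i (FG i).2); split.
- by apply: (metric_closed_bigsetU (F := fun i => (FG i).1)) => i; case: (FGi i).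
- by apply: (metric_open_bigcup (A := fun i => (FG i).2)) => i; case: (FGi i).
- by rewrite -(bigcup_mkord N (fun i => (FG i).1)) => z [i _ /FA Az]; exists i.
- by move=> z [i _ /AG Gz]; exists i.
have muGF : (mu (\bigcup_i ((FG i).2 `\` (FG i).1) `&` ball x0 R0) <= (e / 2)%:E)%E.
  rewrite setI_bigcupl; apply: le_trans (outer_measure_sigma_subadditive _ _) _.
  apply: le_trans (epsilon_trick0 xpredT (ltW e20)).
  apply: lee_nneseries => [i _ _|i _]; first exact: outer_measure_ge0.
  by case: (FGi i) => _ _ _ _ /ltW.
have cover := @setSI _ (ball x0 R0) _ _ (setD_bigcup_sub (N := N) FA AG).
apply: le_lt_trans (le_outer_measure mu _ _ cover) _.
rewrite setIUl; apply: le_lt_trans (outer_measureU2 _ _ _) _.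
by rewrite [e]splitr EFinD; apply: le_lt_trans (leeD2r _ muGF) _; rewrite lteD2lE.
Qed.

Lemma borel_closed_open_regular S : borel_set rho S -> closed_open_regular S.
Proof.
move=> bS; apply: bS; split; last exact: closed_open_regular_open.
split.
- by apply: closed_open_regular_open => z [].
- by move=> A regA; rewrite setTD; exact: closed_open_regular_setC.
- exact: closed_open_regular_bigcup.
Qed.

Lemma borel_inner_closed S e : borel_set rho S -> S `<=` ball x0 R0 -> 0 < e ->
  exists F, [/\ metric_closed F, F `<=` S & (mu (S `\` F) < e%:E)%E].
Proof.
move=> /borel_closed_open_regular[_ regS] SB /regS[F [G [cF _ FS SG muGF]]].
exists F; split=> //; apply: le_lt_trans muGF; apply: le_outer_measure.
by move=> z [Sz nFz]; split; [split=> //; exact: SG | exact: SB].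
Qed.

End inner_regularity.

Lemma closed_inner_approx A x0 R0 e : A `<=` ball x0 R0 -> 0 < e ->
  exists F, [/\ metric_closed F, F `<=` ball x0 R0, (mu F <= mu A)%E &
    (mu A <= mu (A `&` F) + e%:E)%E].
Proof.
move=> AB e0; have [H [bH AH muH]] := mu_regular.2 A.
pose H' := H `&` ball x0 R0.
have AH' : A `<=` H' by move=> z Az; split; [exact: AH | exact: AB].
have muH' : mu H' = mu A.
  apply/eqP; rewrite eq_le (le_outer_measure _ _ _ AH') andbT -muH.
  by apply: le_outer_measure => z [].
have H'B : H' `<=` ball x0 R0 by move=> z [].
have [F [cF FH' muH'F]] := borel_inner_closed (borel_setI bH (borel_mball x0 R0)) H'B e0.
exists F; split=> //.
- by move=> z /FH' [].
- by rewrite -muH'; exact: le_outer_measure.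
apply: le_trans (le_outer_measureIC mu F A) _; rewrite leeD2l //.
by apply: le_trans (ltW muH'F); apply: le_outer_measure => z [/AH' H'z nFz].
Qed.

Lemma thickening_outer_approx F x0 R0 e :
  metric_closed F -> F `<=` ball x0 R0 -> 0 < e ->
  exists2 r, 0 < r & (mu (thickening F r) < mu F + e%:E)%E.
Proof.
move=> cF FB e0; pose T k := thickening F k.+1%:R^-1.
have mT k : mu.-caratheodory (T k).
  exact/caratheodory_metric_open/metric_open_thickening.
have decT k : T k.+1 `<=` T k.
  by apply: le_thickening; rewrite lef_pV2 ?posrE ?ltr0Sn // ler_nat.
have T0fin : (mu (T 0%N) < +oo)%E.
  by apply: mu_sub_mball_lty; exact: thickening_sub_mball FB.
have [N muTN] := caratheodory_bigcap_approx e0 mT decT T0fin.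
exists N.+1%:R^-1; first by rewrite invr_gt0 ltr0Sn.
apply: lt_le_trans muTN _; rewrite leeD2r //.
by apply: le_outer_measure; exact: bigcap_thickening_sub cF.
Qed.

Lemma mu_bigsetU_separated_mball n (z : nat -> X) r : separated (2 * r) n z ->
  mu (\big[setU/set0]_(i < n) ball (z i) r) = (\sum_(i < n) mu (ball (z i) r))%E.
Proof.
move=> zsep; pose A i := if (i < n)%N then ball (z i) r else set0.
have mA i : mu.-caratheodory (A i).
  rewrite /A; case: ifP => _; last exact: caratheodory_measurable_set0.
  exact/caratheodory_metric_open/metric_open_mball.
have tA : trivIset setT A.
  move=> i j _ _ [w []]; rewrite /A; case: ifP => ni; case: ifP => nj //=.
  rewrite /mball /= => ziw zjw; apply/eqP; apply: contrapT => /negP ij.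
  have := zsep i j ni nj ij.
  by have := metric_triangle (z i) w (z j); rewrite (metric_sym w (z j)); lra.
have := caratheodory_additive mA tA n setT; rewrite setTI.
have -> : \big[setU/set0]_(i < n) A i = \big[setU/set0]_(i < n) ball (z i) r.
  by apply: eq_bigr => i _; rewrite /A ltn_ord.
by move=> ->; apply: eq_bigr => i _; rewrite setTI /A ltn_ord.
Qed.

Lemma separated_card_bound x0 R1 s : 0 < R1 -> 0 < s ->
  exists Nmax, forall n (z : nat -> X),
    (forall i, (i < n)%N -> ball x0 R1 (z i)) -> separated s n z -> (n <= Nmax)%N.
Proof.
move=> R10 s0; have s20 : 0 < s / 2 by rewrite divr_gt0.
pose p := Num.Def.archi_bound ((2 * R1 + s) / (s / 2)).
have Rs_le : 2 * R1 + s <= 2 ^+ p * (s / 2).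
  have : (2 * R1 + s) / (s / 2) < p%:R.
    by apply: archi_boundP; rewrite divr_ge0 // ?ltW //; lra.
  rewrite ltr_pdivrMr // => /ltW /le_trans; apply; rewrite ler_pM2r //.
  by rewrite -natrX ler_nat ltnW // ltn_expl.
(* The balls [ball (z i) (s / 2)] are disjoint subsets of [ball x0 (R1 + s)],
   and by doubling each has measure at least [K ^- p] times that of this ball. *)
pose V := mu (ball x0 (R1 + s)).
have VE : V = (fine V)%:E by exact: mu_mball_fineK.
have V0 : 0 < fine V by rewrite -lte_fin -VE mu_mball_gt0 //; lra.
exists (Num.Def.archi_bound (K ^+ p)) => n z zB zsep.
pose h i := fine (mu (ball (z i) (s / 2))).
have hE i : mu (ball (z i) (s / 2)) = (h i)%:E by exact: mu_mball_fineK.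
have V_le i : (i < n)%N -> fine V <= K ^+ p * h i.
  move=> ni; rewrite -lee_fin EFinM -hE -VE.
  apply: mu_mball_le_doubling => //; have := zB i ni; rewrite /mball /= metric_sym.
  by lra.
have sum_le : \sum_(i < n) h i <= fine V.
  rewrite -lee_fin -sumEFin -VE.
  under eq_bigr do rewrite -hE.
  rewrite -mu_bigsetU_separated_mball; last by rewrite mulrC divfK.
  apply: le_outer_measure; rewrite -(bigcup_mkord n (fun i => ball (z i) (s / 2))).
  move=> y [i /= ni zy]; apply: le_lt_trans (metric_triangle x0 (z i) y) _.
  by have := zB i ni; rewrite /mball /= in zy *; lra.
have : n%:R * fine V <= K ^+ p * fine V.
  apply: (@le_trans _ _ (\sum_(i < n) K ^+ p * h i)).
    have -> : n%:R * fine V = \sum_(i < n) fine V.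
      by rewrite sumr_const card_ord mulr_natl.
    by apply: ler_sum => i _; exact: V_le.
  by rewrite -mulr_sumr ler_wpM2l // exprn_ge0 // ltW.
rewrite ler_pM2r // => nK; rewrite -(ler_nat R) ltW //.
exact: le_lt_trans nK (archi_boundP (exprn_ge0 p (ltW K_gt0))).
Qed.

Lemma maximal_separated_net (A : set X) x0 R1 s : 0 < R1 -> 0 < s ->
  A `<=` ball x0 R1 -> exists n (z : nat -> X),
    [/\ forall i, (i < n)%N -> A (z i), separated s n z &
        forall a, A a -> exists2 i, (i < n)%N & rho (z i) a < s].
Proof.
move=> R10 s0 AB; have [Nmax Nmax_ub] := separated_card_bound x0 R10 s0.
pose P n :=
  `[< exists z : nat -> X, (forall i, (i < n)%N -> A (z i)) /\ separated s n z >].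
have P0 : exists n, P n by exists 0%N; apply/asboolP; exists (fun _ => x0).
have P_ub n : P n -> (n <= Nmax)%N.
  by move=> /asboolP[z [zA zsep]]; apply: Nmax_ub zsep => i /zA /AB.
have [m /asboolP[z [zA zsep]] m_max] := ex_maxnP P0 P_ub.
exists m, z; split=> // a Aa; apply: contrapT => a_far.
have far j : (j < m)%N -> s <= rho (z j) a.
  by move=> mj; rewrite leNgt; apply/negP => zja; apply: a_far; exists j.
suff /m_max : P m.+1 by rewrite ltnn.
apply/asboolP; exists (fun i => if i == m then a else z i); split.
  move=> i; rewrite ltnS leq_eqVlt => /orP[/eqP->|mi]; first by rewrite eqxx.
  by rewrite (ltn_eqF mi); exact: zA.
move=> i j; rewrite !ltnS leq_eqVlt => /orP[/eqP->|mi];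
  rewrite leq_eqVlt => /orP[/eqP->|mj] ij.
- by rewrite eqxx in ij.
- by rewrite eqxx (ltn_eqF mj) metric_sym; exact: far.
- by rewrite eqxx (ltn_eqF mi); exact: far.
- by rewrite (ltn_eqF mi) (ltn_eqF mj); exact: zsep.
Qed.

Lemma low_density_mu_le (A F : set X) x0 R1 c s : 0 < R1 -> 0 < s -> 0 <= c ->
  A `<=` ball x0 R1 ->
  (forall z, A z -> (mu (ball z s `&` A) <= c%:E * mu (ball z s))%E) ->
  (mu (A `&` F) <= (c * K)%:E * mu (thickening F s))%E.
Proof.
move=> R10 s0 c0 AB A_density; have s20 : 0 < s / 2 by rewrite divr_gt0.
have AFB : A `&` F `<=` ball x0 R1 by move=> z [/AB].
have [n [z [zAF zsep zcover]]] := maximal_separated_net R10 s0 AFB.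
have cover : A `&` F `<=` \big[setU/set0]_(i < n) (ball (z i) s `&` A).
  rewrite -(bigcup_mkord n (fun i => ball (z i) s `&` A)) => y AFy.
  by have [i ni ziy] := zcover y AFy; exists i => //; split=> //; case: AFy.
apply: le_trans (le_outer_measure mu _ _ cover) _.
apply: le_trans (outer_measure_subadditive mu (fun i => ball (z i) s `&` A) n) _.
apply: (@le_trans _ _ (\sum_(i < n) (c * K)%:E * mu (ball (z i) (s / 2)))%E).
  apply: lee_sum => i _; have [Azi _] := zAF i (ltn_ord i).
  apply: le_trans (A_density _ Azi) _; rewrite EFinM -muleA.
  apply: lee_wpmul2l; first by rewrite lee_fin.
  apply: (@mu_mball_le_doubling _ _ _ _ 1) => //.
  by rewrite metric_xx expr1 add0r mulrC divfK.
rewrite -ge0_sume_distrr => [|i _]; last exact: outer_measure_ge0.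
rewrite -mu_bigsetU_separated_mball; last by rewrite mulrC divfK.
apply: lee_wpmul2l; first by rewrite lee_fin mulr_ge0 // ltW.
apply: le_outer_measure.
rewrite -(bigcup_mkord n (fun i => ball (z i) (s / 2))) => y [i /= ni ziy].
exists (z i); first by case: (zAF i ni).
by apply: lt_trans ziy _; rewrite ltr_pdivrMr // ltr_pMr //; lra.
Qed.

Lemma uniformly_low_density_null (A : set X) x0 R1 c s1 :
  0 < R1 -> 0 <= c -> c * K < 1 -> 0 < s1 -> A `<=` ball x0 R1 ->
  (forall z s, A z -> 0 < s < s1 -> (mu (ball z s `&` A) <= c%:E * mu (ball z s))%E) ->
  mu A = 0%E.
Proof.
move=> R10 c0 cK s10 AB A_density.
have AE : mu A = (fine (mu A))%:E := mu_sub_mball_fineK AB.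
set a := fine (mu A) in AE *; rewrite AE.
have a0 : 0 <= a by apply/fine_ge0/outer_measure_ge0.
have [->//|a_neq0] := eqVneq a 0; have a_gt0 : 0 < a by rewrite lt0r a_neq0.
(* With this [e], [a <= c K (a + e) + e] is impossible for [a > 0]. *)
pose e := (1 - c * K) * a / 4.
have e0 : 0 < e by rewrite divr_gt0 // mulr_gt0 // subr_gt0.
have [F [cF FB muF muAF]] := closed_inner_approx AB e0.
have [r r0 muT] := thickening_outer_approx cF FB e0.
pose s := Num.min r (s1 / 2).
have s0 : 0 < s by rewrite lt_min r0 divr_gt0.
have ss1 : s < s1 by rewrite gt_min; apply/orP; right; lra.
have sr : s <= r by rewrite ge_min lexx.
have := low_density_mu_le F R10 s0 c0 AB (fun z Az => A_density z s Az _).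
rewrite s0 ss1 => /(_ isT) muAF_thickening.
have muAF_le : (mu (A `&` F) <= (c * K)%:E * (a + e)%:E)%E.
  apply: le_trans muAF_thickening _; apply: lee_wpmul2l.
    by rewrite lee_fin mulr_ge0 // ltW.
  apply: le_trans (le_outer_measure mu _ _ (le_thickening (F := F) sr)) _.
  by rewrite EFinD -AE; apply: le_trans (ltW muT) _; rewrite leeD2r.
have := le_trans muAF (leeD2r _ muAF_le).
rewrite AE -EFinM -EFinD lee_fin => a_le; exfalso.
by rewrite /e in a_le e0; nra.
Qed.

Lemma low_density_null (A : set X) x0 R1 c : 0 < R1 -> 0 <= c -> c * K < 1 ->
  A `<=` ball x0 R1 ->
  (forall z, A z -> exists2 s1, 0 < s1 & forall s, 0 < s < s1 ->
     (mu (ball z s `&` A) <= c%:E * mu (ball z s))%E) ->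
  mu A = 0%E.
Proof.
move=> R10 c0 cK AB A_density.
pose An n := A `&` [set z | forall s, 0 < s < n.+1%:R^-1 ->
  (mu (ball z s `&` A) <= c%:E * mu (ball z s))%E].
have An0 n : mu (An n) = 0%E.
  apply: (uniformly_low_density_null (x0 := x0) R10 c0 cK (s1 := n.+1%:R^-1)).
  - by rewrite invr_gt0 ltr0Sn.
  - by move=> z [/AB].
  move=> z s [_ zs] s_bnd; apply: le_trans (zs s s_bnd).
  by apply: le_outer_measure => y [zy [Ay _]].
have A_sub : A `<=` \bigcup_n An n.
  move=> z Az; have [s1 s10 zs] := A_density z Az.
  have [k] := ltr_add_invr s10; rewrite add0r => ks1.
  exists k => //; split=> // s /andP[s0 sk]; apply: zs.
  by rewrite s0 (lt_trans sk).
apply/eqP; rewrite eq_le outer_measure_ge0 andbT.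
apply: le_trans (le_outer_measure mu _ _ A_sub) _.
by apply: le_trans (outer_measure_sigma_subadditive mu An) _; rewrite eseries0.
Qed.

Lemma density_ratio_ge0 B x r : 0 <= density_ratio rho mu B x r.
Proof. by rewrite /density_ratio divr_ge0 // fine_ge0 // outer_measure_ge0. Qed.

Lemma le_density_ratio B B' x r : 0 < r ->
  (mu (ball x r `\` B) <= mu (ball x r `\` B'))%E ->
  density_ratio rho mu B x r <= density_ratio rho mu B' x r.
Proof.
move=> r0; have subB C : ball x r `\` C `<=` ball x r by move=> y [].
rewrite (mu_sub_mball_fineK (subB B)) (mu_sub_mball_fineK (subB B')) lee_fin.
move=> le_fine; rewrite /density_ratio ler_pM2r // invr_gt0 -lte_fin.
by rewrite -mu_mball_fineK mu_mball_gt0.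
Qed.

Lemma mu_interior_point_setDN (C U N : set X) x xi : 0 < xi -> mu N = 0%E ->
  mu_interior_point rho mu C x -> U x -> (C `&` ball x xi) `\` N `<=` U ->
  mu_interior_point rho mu U x.
Proof.
move=> xi0 N0 [_ [B [bB BC B_dens]]] Ux CU; split=> //.
have [H [bH NH muH]] := mu_regular.2 N; rewrite N0 in muH.
exists ((B `&` ball x xi) `\` H); split.
- by apply: borel_setD => //; apply: borel_setI => //; exact: borel_mball.
- by move=> y [[/BC Cy xy] nHy]; apply: CU; split=> // /NH.
have ratio_bnd : \forall r \near (0 : R)^'+, 0 <= density_ratio rho mu
    ((B `&` ball x xi) `\` H) x r <= density_ratio rho mu B x r.
  near=> r; have r0 : 0 < r by near: r; exact: nbhs_right_gt.
  rewrite density_ratio_ge0 le_density_ratio //.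
  have sub : ball x r `\` ((B `&` ball x xi) `\` H) `<=` (ball x r `\` B) `|` H.
    move=> y [xy nBy]; have [By|] := pselect (B y); last by left.
    right; apply: contrapT => nHy; apply: nBy; split=> //; split=> //.
    by apply: mball_le xy; apply: ltW; near: r; exact: nbhs_right_lt.
  apply: le_trans (le_outer_measure mu _ _ sub) _.
  by apply: le_trans (outer_measureU2 _ _ _) _; rewrite muH adde0.
apply: (squeeze_cvgr ratio_bnd) B_dens.
by apply/cvgrPdist_lt => eps eps0; near=> t; rewrite subrr normr0.
Unshelve. all: by end_near.
Qed.

Lemma full_at_nearby_mu_le d eta B e z s : 0 <= d -> full_at rho mu d eta B e ->
  rho z e < s -> 0 < s -> 2 * s < eta ->
  (mu (ball z s `\` B) <= (d * K ^+ 2)%:E * mu (ball z s))%E.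
Proof.
move=> d0 e_full ze s0 seta.
apply: le_trans (full_at_mu_le (r' := 2 * s) e_full _ _) _.
- by rewrite mulr_gt0.
- by rewrite metric_sym; lra.
rewrite EFinM -muleA; apply: lee_wpmul2l; first by rewrite lee_fin.
by apply: mu_mball_le_doubling => //; rewrite expr2; lra.
Qed.

Lemma full_at_cover d (E : set X) x (B : X -> set X) : 0 <= d -> d * K ^+ 3 < 1 ->
  E !=set0 -> mu_interior_point rho mu (metric_closure rho E) x ->
  (exists2 xi : R, 0 < xi & forall z, metric_closure rho E z -> z <> x -> rho z x < xi ->
     exists l eta : R, [/\ 0 < l, 0 < eta &
       forall y, E y -> ball z l y -> full_at rho mu d eta (B y) y]) ->
  exists U (rx : X -> X), [/\ mu_neighborhood rho mu U x,
    (forall y, U y -> E (rx y)) & (forall y, U y -> y <> x -> B (rx y) y)].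
Proof.
move=> d0 dK [e0 Ee0] xint [xi xi0 xi_full].
pose A := [set z | [/\ metric_closure rho E z, rho z x < xi, z <> x &
  forall e, E e -> ~ B e z]].
have muA : mu A = 0%E.
  apply: (low_density_null (x0 := x) (c := d * K ^+ 2) xi0).
  - by rewrite mulr_ge0 // exprn_ge0 // ltW.
  - by rewrite -mulrA -exprSr.
  - by move=> z [_ zx _ _]; rewrite /mball /= metric_sym.
  move=> z [Ez zx zx' nB]; have [l [eta [l0 eta0 z_full]]] := xi_full z Ez zx' zx.
  exists (Num.min l (eta / 2)); first by rewrite lt_min l0 divr_gt0.
  move=> s /andP[s0]; rewrite lt_min => /andP[sl seta].
  have [e Ee ze] := Ez s s0.
  apply: le_trans (full_at_nearby_mu_le d0 (z_full e Ee _) ze s0 _).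
  - by apply: le_outer_measure => y [zy [_ _ _ nBy]]; split=> //; exact: nBy.
  - exact: lt_trans ze sl.
  - by lra.
pose U := [set y | y = x \/ exists e, E e /\ B e y].
pose rx y := if pselect (exists e, E e /\ B e y) is left h then projT1 (cid h) else e0.
exists U, rx; split.
- apply: (mu_interior_point_setDN xi0 muA xint); first by left.
  move=> y [[Ey xy] nAy]; have [->|yx] := pselect (y = x); first by left.
  right; apply: contrapT => nB; apply: nAy; split=> //; first by rewrite metric_sym.
  by move=> e Ee Bey; apply: nB; exists e.
- by move=> y _; rewrite /rx; case: pselect => [h|_] //; case: (projT2 (cid h)).
- move=> y [->//|[e [Ee Bey]]] _; rewrite /rx.
  by case: pselect => [h|[]]; [case: (projT2 (cid h)) | exists e].
Qed.

End doubling_measure.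
End metric_space.

Theorem lemma2p7 (R : realType) (K : R) : 0 < K ->
  exists delta : R, 0 < delta /\
  forall (X : Type) (rho : X -> X -> R) (mu : {outer_measure set X -> \bar R}),
    doubling_mms rho mu K ->
    (* (1) *)
    (forall (x y : X) (eta : R) (Bx By : set X),
        0 < eta -> full_at rho mu delta eta Bx x ->
        full_at rho mu delta eta By y ->
        0 < rho x y -> rho x y < eta / 3 ->
        (0 < mu (mball rho x (3 * rho x y) `&` Bx
                 `&` mball rho y (3 * rho x y) `&` By))%E) /\
    (* (2) *)
    (forall (E : set X) (x : X) (B : X -> set X),
        E !=set0 ->
        mu_interior_point rho mu (metric_closure rho E) x ->
        (forall y, E y -> mu_measurable mu (B y)) ->
        (exists2 xi : R, 0 < xi &
           forall z, metric_closure rho E z -> z <> x -> rho z x < xi ->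
             exists l eta : R, [/\ 0 < l, 0 < eta &
               forall y, E y -> mball rho z l y ->
                 full_at rho mu delta eta (B y) y]) ->
        exists U : set X, exists rx : X -> X,
          [/\ mu_neighborhood rho mu U x,
              (forall y, U y -> E (rx y)) &
              (forall y, U y -> y <> x -> B (rx y) y)]).
Proof.
move=> K0; pose delta := ((1 + K) ^+ 3)^-1.
have K1 : 0 < 1 + K by lra.
have delta0 : 0 < delta by rewrite invr_gt0 exprn_gt0.
have delta_overlap : delta * (1 + K) < 1.
  by rewrite mulrC ltr_pdivrMr ?exprn_gt0 // mul1r !exprS expr0 mulr1; nra.
have delta_cover : delta * K ^+ 3 < 1.
  by rewrite mulrC ltr_pdivrMr ?exprn_gt0 // mul1r ltrXn2r //; lra.
exists delta; split=> // X rho mu [_ rho_metric _ mu_regular mu_doubling]; split.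
  by move=> x y eta Bx By _; exact: full_at_overlap (ltW delta0) delta_overlap.
by move=> E x B E0 xint _; exact: full_at_cover (ltW delta0) delta_cover E0 xint.
Qed.
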